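(* Let $(Q,\cdot,e)$ be a double Ward quasigroup and let $x\,\bar{\cdot}\,y=y\cdot x$ be the dual operation. Then $(Q,\bar{\cdot},e)$ is a double Ward quasigroup.
   Context: A quasigroup is a magma in which $ax=b$ and $ya=b$ have unique solutions for all $a,b$. A double Ward quasigroup $(Q,\cdot,e)$ is a quasigroup with an element $e$ such that $(ee\cdot xz)(ey\cdot z)=xy$ for all $x,y,z\in Q$. *)

Definition is_quasigroup {Q : Type} (mul : Q -> Q -> Q) : Prop :=
  (forall a b : Q, exists! x : Q, mul a x = b) /\
  (forall a b : Q, exists! y : Q, mul y a = b).

Definition double_ward_quasigroup {Q : Type} (mul : Q -> Q -> Q) (e : Q) : Prop :=
  is_quasigroup mul /\
  forall x y z : Q,
    mul (mul (mul e e) (mul x z)) (mul (mul e y) z) = mul x y.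

Definition dual_op {Q : Type} (mul : Q -> Q -> Q) : Q -> Q -> Q :=
  fun x y => mul y x.


(* In a double Ward quasigroup, e e = e, x e = e x, and the map x |-> e x is an
   involutive anti-automorphism.
   Applying it to the dual Ward identity turns it into the Ward identity
   instantiated at e x, e y, e z; injectivity of x |-> e x does the rest. *)

Section Quasigroup.

Context {Q : Type} {mul : Q -> Q -> Q}.
Hypothesis mul_quasigroup : is_quasigroup mul.

Lemma quasigroup_cancel_l (a x y : Q) : mul a x = mul a y -> x = y.
Proof.
  intros Hxy. destruct (proj1 mul_quasigroup a (mul a x)) as [u [_ Hu]].
  rewrite <- (Hu x eq_refl). apply Hu. symmetry. exact Hxy.
Qed.

Lemma quasigroup_cancel_r (a x y : Q) : mul x a = mul y a -> x = y.
Proof.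
  intros Hxy. destruct (proj2 mul_quasigroup a (mul x a)) as [u [_ Hu]].
  rewrite <- (Hu x eq_refl). apply Hu. symmetry. exact Hxy.
Qed.

Lemma quasigroup_solve_l (a b : Q) : exists x, mul a x = b.
Proof. destruct (proj1 mul_quasigroup a b) as [x [Hx _]]. exists x. exact Hx. Qed.

Lemma quasigroup_solve_r (a b : Q) : exists y, mul y a = b.
Proof. destruct (proj2 mul_quasigroup a b) as [y [Hy _]]. exists y. exact Hy. Qed.

Lemma is_quasigroup_dual : is_quasigroup (dual_op mul).
Proof. split; intros a b; [apply (proj2 mul_quasigroup) | apply (proj1 mul_quasigroup)]. Qed.

End Quasigroup.

Section DoubleWard.

Context {Q : Type} {mul : Q -> Q -> Q} {e : Q}.
Hypothesis mul_quasigroup : is_quasigroup mul.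
Hypothesis ward : forall x y z : Q,
  mul (mul (mul e e) (mul x z)) (mul (mul e y) z) = mul x y.

Local Infix "·" := mul (at level 40, left associativity).

Lemma ward_ee_mul_r (s : Q) : (e · e · s) · s = e.
Proof.
  destruct (quasigroup_solve_l mul_quasigroup e s) as [z Hz].
  destruct (quasigroup_solve_l mul_quasigroup e e) as [y Hy].
  pose proof (ward e y z) as H. rewrite Hy, Hz in H. exact H.
Qed.

Lemma ward_e_mul_r (y : Q) : (e · y) · y = e.
Proof. rewrite <- (ward (e · y) y y), ward_ee_mul_r. reflexivity. Qed.

Lemma ward_idempotent : e · e = e.
Proof.
  assert (Hf : e · (e · e) = (e · e) · (e · e)).
  { apply (quasigroup_cancel_r mul_quasigroup (e · e)).
    rewrite ward_e_mul_r, ward_ee_mul_r. reflexivity. }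
  symmetry. exact (quasigroup_cancel_r mul_quasigroup _ _ _ Hf).
Qed.

Lemma ward_e_mul_e (u : Q) : (e · u) · e = u.
Proof.
  destruct (quasigroup_solve_r mul_quasigroup e u) as [x Hx].
  pose proof (ward x e e) as H. rewrite ward_e_mul_r, ward_idempotent, Hx in H.
  exact H.
Qed.

Lemma ward_e_swap (y y' : Q) : e · ((e · y') · y) = (e · y) · y'.
Proof.
  rewrite <- (ward (e · y) y' y), ward_e_mul_r, !ward_idempotent. reflexivity.
Qed.

Lemma ward_e_involutive (y : Q) : e · (e · y) = y.
Proof.
  pose proof (ward_e_swap y e) as H. rewrite ward_idempotent, ward_e_mul_e in H.
  exact H.
Qed.

Lemma ward_e_antimorphism (a b : Q) : e · (a · b) = (e · b) · (e · a).
Proof.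
  pose proof (ward_e_swap b (e · a)) as H. rewrite ward_e_involutive in H.
  exact H.
Qed.

Lemma ward_mul_e_comm (a : Q) : a · e = e · a.
Proof.
  apply (quasigroup_cancel_l mul_quasigroup e).
  rewrite ward_e_antimorphism, ward_idempotent. reflexivity.
Qed.

Lemma ward_dual (x y z : Q) :
  dual_op mul (dual_op mul (dual_op mul e e) (dual_op mul x z))
              (dual_op mul (dual_op mul e y) z)
  = dual_op mul x y.
Proof.
  unfold dual_op. rewrite ward_idempotent, !ward_mul_e_comm.
  apply (quasigroup_cancel_l mul_quasigroup e).
  rewrite (ward_e_antimorphism (z · (e · y))), ward_e_involutive.
  rewrite (ward_e_antimorphism z), ward_e_involutive.
  pose proof (ward (e · x) (e · y) (e · z)) as H.
  rewrite ward_idempotent, (ward_e_antimorphism (e · x)), !ward_e_involutive in H.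
  rewrite H, ward_e_antimorphism. reflexivity.
Qed.

End DoubleWard.

Theorem theorem4p9 (Q : Type) (mul : Q -> Q -> Q) (e : Q) :
  double_ward_quasigroup mul e -> double_ward_quasigroup (dual_op mul) e.
Proof.
  intros [mul_quasigroup ward]. split.
  - exact (is_quasigroup_dual mul_quasigroup).
  - exact (ward_dual mul_quasigroup ward).
Qed.
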